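(* Let $W$ be a weakly symmetric discrete memoryless channel with input alphabet $\mathbb{F}_q$, let $\mu=\mathbb{E}(\|\pi\|^2)$, and suppose the all-zero word of length $n$ is sent through $n$ independent uses of $W$, with resulting reliability matrix $\Pi$. Then for every $\epsilon>0$, $$\mathrm{prob}\big(\langle\Pi,\lfloor\mathbf{0}\rfloor\rangle\le(1-\epsilon)\mu n\big)\le e^{-2n\mu^2\epsilon^2},\qquad \mathrm{prob}\big(\langle\Pi,\Pi\rangle\ge(1+\epsilon)n\mu\big)\le e^{-2n\mu^2\epsilon^2}.$$
   Context: A discrete memoryless channel with transition probabilities $W(y|x)$ is weakly symmetric if its output alphabet admits a partition $Y_1\cup\dots\cup Y_r$ such that each submatrix $(W(y|x))_{x\in\mathbb{F}_q,y\in Y_i}$ has all rows permutations of each other and all columns permutations of each other. The input is assumed uniform on $\mathbb{F}_q$; the APP vector of output $y$ is $\pi_y=(\mathrm{prob}(x=\alpha|y))_{\alpha\in\mathbb{F}_q}$ and $\|\pi\|^2=\sum_\alpha\pi(\alpha)^2$; $\mathbb{E}(\|\pi\|^2)$ is the expectation over the channel output. For received $\mathbf{y}=(y_1,\dots,y_n)$, the reliability matrix $\Pi$ is the $q\times n$ matrix with $j$-th column $\pi_{y_j}$. $\lfloor\mathbf{0}\rfloor$ is the $q\times n$ 0/1 matrix with ones exactly in row $0$; $\langle A,B\rangle=\sum_{i,j}a_{ij}b_{ij}$. *)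

From HB Require Import structures.
From mathcomp Require Import all_boot all_order all_algebra all_field.
From mathcomp Require Import reals. From mathcomp.analysis Require Import sequences exp.
Set Implicit Arguments. Unset Strict Implicit. Unset Printing Implicit Defensive.
Import Order.TTheory GRing.Theory Num.Theory.
Local Open Scope ring_scope.

Section Channel.
Variables (R : realType) (F : finFieldType) (Y : finType).

(* W x y = W(y|x) *)
Definition is_dmc (W : F -> Y -> R) : Prop :=
  (forall x y, 0 <= W x y) /\ (forall x, \sum_y W x y = 1).

Definition weakly_symmetric (W : F -> Y -> R) : Prop :=
  exists P : {set {set Y}}, partition P [set: Y] /\
    forall B, B \in P ->
      (forall x x' : F, perm_eq [seq W x y | y <- enum B] [seq W x' y | y <- enum B]) /\
      (forall y y', y \in B -> y' \in B ->
         perm_eq [seq W x y | x <- enum F] [seq W x y' | x <- enum F]).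

(* APP vector under uniform input: prob(x = a | y) *)
Definition APP (W : F -> Y -> R) (y : Y) (a : F) : R :=
  (W a y / #|F|%:R) / (\sum_b W b y / #|F|%:R).

Definition sqnorm (pi : F -> R) : R := \sum_a pi a ^+ 2.

Definition out_prob (W : F -> Y -> R) (y : Y) : R := \sum_x W x y / #|F|%:R.

Definition mu (W : F -> Y -> R) : R := \sum_y out_prob W y * sqnorm (APP W y).

Definition relmat (W : F -> Y -> R) n (y : {ffun 'I_n -> Y}) : F -> 'I_n -> R :=
  fun a j => APP W (y j) a.

Definition zero_floor n : F -> 'I_n -> R := fun a _ => if a == 0 then 1 else 0.

Definition frob n (A B : F -> 'I_n -> R) : R := \sum_a \sum_j A a j * B a j.

Definition prob0 (W : F -> Y -> R) n (E : pred {ffun 'I_n -> Y}) : R :=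
  \sum_(y : {ffun 'I_n -> Y} | E y) \prod_j W 0 (y j).

End Channel.

From HB Require Import structures.
From mathcomp Require Import all_boot all_order all_algebra all_field.
From mathcomp Require Import reals. From mathcomp.analysis Require Import sequences exp.
From mathcomp Require Import interval_inference classical_sets topology.
From mathcomp Require Import normedtype derive realfun convex.
From mathcomp Require Import ring lra.
Set Implicit Arguments. Unset Strict Implicit. Unset Printing Implicit Defensive.
Import Order.TTheory GRing.Theory Num.Theory.
Import numFieldNormedType.Exports.
Local Open Scope ring_scope.

(* When the all-zero word is sent, the outputs y_j are i.i.d. with law W(.|0), so
   <Π, ⌊0⌋> = Σ_j π_(y_j)(0) and n - <Π, Π> = Σ_j (1 - ‖π_(y_j)‖²) are sums of n i.i.d.
   [0,1]-valued variables, to which Hoeffding's inequality applies with deviation εμ.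
   Their means are computed from the symmetry of the channel: a sum Σ_y g(W(y|x)) φ(y) with
   φ constant on the output blocks does not depend on x, so conditioning on x = 0 is the same
   as averaging over a uniform input, and both means come out as μ = E‖π‖² (resp. 1 - μ). *)

Section BernoulliMgf.
Local Open Scope classical_set_scope.
Variables (R : realType) (m : R).
Hypotheses (m_ge0 : 0 <= m) (m_le1 : m <= 1).

(* With θ(s) = m e^s / D(s), one has (ln D)' = θ and (ln D)'' = θ (1 - θ) <= 1/4, so
   G = θ - m - s/4 decreases and vanishes at 0; since K' = e^(-sm - s²/8) D G, the
   function K is maximal, equal to 1, at s = 0. *)
Let D (s : R) : R := 1 - m + m * expR s.
Let G (s : R) : R := m * expR s / D s - m - s / 4.
Let K (s : R) : R := D s * expR (- (s * m) - s ^+ 2 / 8).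

Let D_gt0 s : 0 < D s.
Proof.
rewrite /D; have [->|m_neq0] := eqVneq m 0; first by rewrite subr0 mul0r addr0.
by rewrite ltr_wpDl ?subr_ge0 // mulr_gt0 ?expR_gt0 // lt_def m_neq0.
Qed.

Let is_derive_D (x : R) : is_derive x 1 D (m * expR x).
Proof. by rewrite /D; apply: is_derive_eq; rewrite add0r mul1r. Qed.

Let is_derive_G (x : R) : is_derive x 1 G (- (m * expR x / D x - 1/2) ^+ 2).
Proof.
have Dx_neq0 : D x != 0 by rewrite gt_eqF.
have : is_derive x 1 (fun s => (D s)^-1) (- (D x) ^- 2 *: (m * expR x)).
  exact: is_deriveV.
rewrite /G => is_derive_invD; apply: is_derive_eq.
rewrite -![_ *: _]/(_ * _); move: Dx_neq0; rewrite /D => ?.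
by field.
Qed.

Let is_derive_K (x : R) : is_derive x 1 K (expR (- (x * m) - x ^+ 2 / 8) * D x * G x).
Proof.
have Dx_neq0 : D x != 0 by rewrite gt_eqF.
rewrite /K; apply: is_derive_eq.
rewrite -![_ *: _]/(_ * _); move: Dx_neq0; rewrite /G /D => ?.
by field.
Qed.

Let continuous_within (f f' : R -> R) (i : interval R) :
  (forall x : R, is_derive x 1 f (f' x)) -> {within [set` i], continuous f}.
Proof. by move=> df; apply: derivable_within_continuous => x _; case: (df x). Qed.

Let derivable_G (x : R) : derivable G x 1.
Proof. by case: (is_derive_G x). Qed.

Let derivable_K (x : R) : derivable K x 1.
Proof. by case: (is_derive_K x). Qed.

Let derive1_G_le0 (x : R) : G^`() x <= 0.
Proof. by rewrite derive1E; case: (is_derive_G x) => _ ->; rewrite oppr_le0 sqr_ge0. Qed.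

Let G0 : G 0 = 0.
Proof. by rewrite /G /D expR0 mulr1 subrK divr1 subrr mul0r subr0. Qed.

Let K0 : K 0 = 1.
Proof.
by rewrite /K /D expR0 mulr1 subrK mul1r mul0r expr0n /= mul0r oppr0 addr0 expR0.
Qed.

Let G_ge0 t : t <= 0 -> 0 <= G t.
Proof.
move=> t_le0; rewrite -G0.
exact: (ler0_derive1_nincrNy (fun x _ => @derivable_G x) (fun x _ => @derive1_G_le0 x)
  (continuous_within is_derive_G) t_le0 (lexx 0)).
Qed.

Let G_le0 t : 0 <= t -> G t <= 0.
Proof.
move=> t_ge0; rewrite -G0.
exact: (ler0_derive1_nincry (fun x _ => @derivable_G x) (fun x _ => @derive1_G_le0 x)
  (continuous_within is_derive_G) (lexx 0) t_ge0).
Qed.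

Let K_le1 s : K s <= 1.
Proof.
have K'E x : K^`() x = expR (- (x * m) - x ^+ 2 / 8) * D x * G x.
  by rewrite derive1E; case: (is_derive_K x).
rewrite -K0; have [s_le0|s_gt0] := lerP s 0.
- have K'_ge0 x : x \in `]-oo, 0[%R -> 0 <= K^`() x.
    rewrite in_itv /= K'E => /ltW x_le0.
    by rewrite !mulr_ge0 ?expR_ge0 ?(ltW (D_gt0 x)) ?G_ge0.
  exact: (ger0_derive1_ndecrNy (fun x _ => @derivable_K x) K'_ge0
    (continuous_within is_derive_K) s_le0 (lexx 0)).
- have K'_le0 x : x \in `]0, +oo[%R -> K^`() x <= 0.
    rewrite in_itv /= andbT K'E => /ltW x_ge0.
    by rewrite mulr_ge0_le0 ?mulr_ge0 ?expR_ge0 ?(ltW (D_gt0 x)) ?G_le0.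
  exact: (ler0_derive1_nincry (fun x _ => @derivable_K x) K'_le0
    (continuous_within is_derive_K) (lexx 0) (ltW s_gt0)).
Qed.

Lemma bernoulli_mgf_le s : 1 - m + m * expR s <= expR (s * m + s ^+ 2 / 8).
Proof.
have := K_le1 s; rewrite /K -/(D s).
rewrite -ler_pdivlMr ?expR_gt0 // mul1r -expRN => /le_trans; apply.
by rewrite opprB opprK addrC.
Qed.

End BernoulliMgf.

Section Hoeffding.
Variable R : realType.

Lemma expR_le_chord (s x : R) : 0 <= x -> x <= 1 -> expR (s * x) <= 1 - x + x * expR s.
Proof.
move=> x_ge0 x_le1; have := @convex_expR R (@Itv01 R x x_ge0 x_le1) s 0.
by rewrite !convRE /= expR0 mulr0 addr0 mulr1 mulrC addrC.
Qed.

Lemma ler_sum_pred (T : finType) (P Q : pred T) (f : T -> R) :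
  (forall t, 0 <= f t) -> subpred P Q -> \sum_(t | P t) f t <= \sum_(t | Q t) f t.
Proof.
move=> f_ge0 PQ; rewrite [leLHS]big_mkcond [leRHS]big_mkcond /=.
by apply: ler_sum => t _; case: ifP => [/PQ -> //|_]; case: ifP.
Qed.

Lemma chernoff_bound (T : finType) (w S : T -> R) (a s : R) :
  (forall t, 0 <= w t) -> 0 <= s ->
  \sum_(t | S t <= a) w t <= \sum_t w t * expR (s * (a - S t)).
Proof.
move=> w_ge0 s_ge0; rewrite [leLHS]big_mkcond /=; apply: ler_sum => t _.
case: ifP => [Sa|_]; last by rewrite mulr_ge0 ?expR_ge0.
apply: ler_peMr => //; apply: le_trans (expR_ge1Dx _).
by rewrite lerDl mulr_ge0 ?subr_ge0.
Qed.

Variable Y : finType.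

Lemma sum_prod_expR (p f : Y -> R) (n : nat) :
  \sum_(y : {ffun 'I_n -> Y}) (\prod_j p (y j)) * expR (\sum_j f (y j))
    = (\sum_y p y * expR (f y)) ^+ n.
Proof.
rewrite -[in RHS](card_ord n) -prodr_const bigA_distr_bigA /=.
by apply: eq_bigr => y _; rewrite expR_sum -big_split.
Qed.

Variables (p X : Y -> R).
Hypothesis p_ge0 : forall y, 0 <= p y.

Lemma chernoff_bound_iid (n : nat) (a s : R) : 0 <= s ->
  \sum_(y : {ffun 'I_n -> Y} | \sum_j X (y j) <= a) \prod_j p (y j)
  <= expR (s * a) * (\sum_y p y * expR (- s * X y)) ^+ n.
Proof.
move=> s_ge0.
have -> : expR (s * a) * (\sum_y p y * expR (- s * X y)) ^+ n
    = \sum_(y : {ffun 'I_n -> Y}) (\prod_j p (y j)) * expR (s * (a - \sum_j X (y j))).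
  rewrite -(sum_prod_expR p (fun y => - s * X y)) mulr_sumr; apply: eq_bigr => y _.
  rewrite mulrBr expRD mulrCA mulr_sumr -sumrN.
  by congr (_ * (_ * expR _)); apply: eq_bigr => j _; rewrite mulNr.
by apply: chernoff_bound => // y; exact: prodr_ge0.
Qed.

Hypothesis p_sum1 : \sum_y p y = 1.
Hypotheses (X_ge0 : forall y, 0 <= X y) (X_le1 : forall y, X y <= 1).

Lemma hoeffding_lemma s :
  \sum_y p y * expR (s * X y) <= expR (s * (\sum_y p y * X y) + s ^+ 2 / 8).
Proof.
set m := \sum_y p y * X y.
have m_ge0 : 0 <= m by apply: sumr_ge0 => y _; rewrite mulr_ge0.
have m_le1 : m <= 1 by rewrite -p_sum1; apply: ler_sum => y _; rewrite ler_piMr.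
apply: le_trans (bernoulli_mgf_le m_ge0 m_le1 s).
apply: (@le_trans _ _ (\sum_y p y * (1 - X y + X y * expR s))).
  by apply: ler_sum => y _; rewrite ler_wpM2l ?expR_le_chord.
under eq_bigr => y _ do rewrite mulrDr mulrBr mulr1 mulrA.
by rewrite !big_split /= sumrN -mulr_suml p_sum1.
Qed.

Lemma hoeffding_lower_tail (n : nat) (d : R) : 0 <= d ->
  \sum_(y : {ffun 'I_n -> Y} | \sum_j X (y j) <= n%:R * (\sum_y p y * X y - d))
     \prod_j p (y j)
  <= expR (- (2 * n%:R * d ^+ 2)).
Proof.
move=> d_ge0; set m := \sum_y p y * X y.
(* [s = 4 d] minimises the Chernoff exponent [- s n d + n s² / 8]. *)
apply: le_trans (chernoff_bound_iid _ _ (_ : 0 <= 4 * d)) _; first by rewrite mulr_ge0.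
have mgf_ge0 : 0 <= \sum_y p y * expR (- (4 * d) * X y).
  by rewrite sumr_ge0 // => y _; rewrite mulr_ge0 ?expR_ge0.
apply: le_trans (ler_wpM2l (expR_ge0 _) (lerXn2r n mgf_ge0 (expR_ge0 _) (hoeffding_lemma _))) _.
rewrite -expRM_natl -expRD -/m.
suff -> : 4 * d * (n%:R * (m - d)) + n%:R * (- (4 * d) * m + (- (4 * d)) ^+ 2 / 8)
  = - (2 * n%:R * d ^+ 2) by [].
by field.
Qed.

End Hoeffding.

Lemma card_finField_neq0 (R : numDomainType) (F : finFieldType) : #|F|%:R != 0 :> R.
Proof. by rewrite pnatr_eq0 -lt0n; apply/card_gt0P; exists 0. Qed.

Section APP.
Variables (R : realType) (F : finFieldType) (Y : finType) (W : F -> Y -> R).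

Lemma APPE y a : APP W y a = W a y / \sum_b W b y.
Proof.
by rewrite /APP -mulr_suml invfM invrK mulrACA mulVf ?card_finField_neq0 // mulr1.
Qed.

Lemma sqnorm_ge0 (pi : F -> R) : 0 <= sqnorm pi.
Proof. by apply: sumr_ge0 => a _; exact: sqr_ge0. Qed.

Lemma frob_relmat_zero_floor n (y : {ffun 'I_n -> Y}) :
  frob (relmat W y) (@zero_floor R F n) = \sum_j APP W (y j) 0.
Proof.
rewrite /frob exchange_big /=; apply: eq_bigr => j _.
rewrite (bigD1 0) //= /zero_floor /relmat eqxx mulr1 big1 ?addr0 //.
by move=> a /negPf ->; rewrite mulr0.
Qed.

Lemma frob_relmat_self n (y : {ffun 'I_n -> Y}) :
  frob (relmat W y) (relmat W y) = \sum_j sqnorm (APP W (y j)).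
Proof.
rewrite /frob exchange_big /=; apply: eq_bigr => j _.
by apply: eq_bigr => a _; rewrite expr2.
Qed.

Hypothesis W_ge0 : forall x y, 0 <= W x y.

Lemma APP_ge0 y a : 0 <= APP W y a.
Proof. by rewrite APPE divr_ge0 ?sumr_ge0. Qed.

Lemma sum_APP_le1 y : \sum_a APP W y a <= 1.
Proof.
under eq_bigr do rewrite APPE.
rewrite -mulr_suml; have [->|c_neq0] := eqVneq (\sum_b W b y) 0.
  by rewrite mul0r ler01.
by rewrite divff.
Qed.

Lemma APP_le1 y a : APP W y a <= 1.
Proof.
apply: le_trans (sum_APP_le1 y); rewrite (bigD1 a) //= lerDl.
by apply: sumr_ge0 => b _; exact: APP_ge0.
Qed.

Lemma sqnorm_APP_le1 y : sqnorm (APP W y) <= 1.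
Proof.
apply: le_trans (sum_APP_le1 y); apply: ler_sum => a _.
by rewrite expr2 ler_piMr ?APP_ge0 ?APP_le1.
Qed.

End APP.

Section WeaklySymmetric.
Variables (R : realType) (F : finFieldType) (Y : finType) (W : F -> Y -> R).
Variable P : {set {set Y}}.
Hypothesis P_partition : finset.partition P [set: Y].
Hypothesis rows_perm : forall B, B \in P -> forall x x' : F,
  perm_eq [seq W x y | y <- enum B] [seq W x' y | y <- enum B].
Hypothesis cols_perm : forall B, B \in P -> forall y y', y \in B -> y' \in B ->
  perm_eq [seq W x y | x <- enum F] [seq W x y' | x <- enum F].

Definition blockwise_constant (phi : Y -> R) :=
  forall B, B \in P -> forall y y', y \in B -> y' \in B -> phi y = phi y'.

Lemma sum_col_perm (h : R -> R) B y y' : B \in P -> y \in B -> y' \in B ->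
  \sum_x h (W x y) = \sum_x h (W x y').
Proof.
move=> PB yB y'B; rewrite -[LHS]big_enum -[RHS]big_enum /=.
by rewrite -!(big_map (W^~ _) xpredT h) (perm_big _ (cols_perm PB yB y'B)).
Qed.

Lemma sum_row_perm (g : R -> R) (phi : Y -> R) a a' : blockwise_constant phi ->
  \sum_y g (W a y) * phi y = \sum_y g (W a' y) * phi y.
Proof.
move=> phiP; case/and3P: P_partition => /eqP P_cover P_triv _.
have sum_blocks (f : Y -> R) : \sum_y f y = \sum_(B in P) \sum_(y in B) f y.
  by rewrite -big_trivIset // P_cover; apply: eq_bigl => y; rewrite inE.
rewrite !sum_blocks; apply: eq_bigr => B PB.
have [->|[y0 y0B]] := set_0Vmem B; first by rewrite !big_set0.
have sum_block x : \sum_(y in B) g (W x y) * phi y = (\sum_(y in B) g (W x y)) * phi y0.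
  by rewrite mulr_suml; apply: eq_bigr => y yB; rewrite (phiP B PB y y0).
rewrite !sum_block -!big_enum /= -!(big_map (W _) xpredT g).
by rewrite (perm_big _ (rows_perm PB a a')).
Qed.

Lemma sum_row0_average (g : R -> R) (phi : Y -> R) : blockwise_constant phi ->
  \sum_y g (W 0 y) * phi y = #|F|%:R^-1 * \sum_y (\sum_a g (W a y)) * phi y.
Proof.
move=> phiP; under [in RHS]eq_bigr do rewrite mulr_suml.
rewrite exchange_big /= (eq_bigr _ (fun a _ => sum_row_perm g a 0 phiP)).
rewrite sumr_const -(mulr_natl (\sum_y g (W 0 y) * phi y)) mulrA.
by rewrite mulVf ?mul1r ?card_finField_neq0.
Qed.

Lemma colsum_blockwise : blockwise_constant (fun y => \sum_b W b y).
Proof. by move=> B PB y y' yB y'B; exact: (sum_col_perm id PB yB y'B). Qed.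

Lemma sqnorm_APP_blockwise : blockwise_constant (fun y => sqnorm (APP W y)).
Proof.
move=> B PB y y' yB y'B /=; rewrite /sqnorm.
have colsum_eq : \sum_b W b y = \sum_b W b y' := colsum_blockwise PB yB y'B.
under eq_bigr do rewrite APPE colsum_eq.
under [RHS]eq_bigr do rewrite APPE.
exact: (sum_col_perm (fun v => (v / \sum_b W b y') ^+ 2) PB yB y'B).
Qed.

Lemma mean_APP0 : \sum_y W 0 y * APP W y 0 = mu W.
Proof.
have inv_colsum : blockwise_constant (fun y => (\sum_b W b y)^-1).
  by move=> B PB y y' yB y'B /=; rewrite (colsum_blockwise PB yB y'B).
under eq_bigr do rewrite APPE mulrA -expr2.
rewrite (sum_row0_average (fun v => v ^+ 2) inv_colsum) /mu mulr_sumr.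
apply: eq_bigr => y _; rewrite /out_prob /sqnorm -mulr_suml.
under [X in _ = _ * X]eq_bigr do rewrite APPE expr_div_n.
rewrite -mulr_suml; set c := \sum_b W b y; set S := \sum_a W a y ^+ 2.
have [->|c_neq0] := eqVneq c 0; first by rewrite invr0 !(mul0r, mulr0).
by field; rewrite c_neq0 card_finField_neq0.
Qed.

Lemma mean_sqnorm_APP : \sum_y W 0 y * sqnorm (APP W y) = mu W.
Proof.
rewrite (sum_row0_average id sqnorm_APP_blockwise) /mu mulr_sumr.
by apply: eq_bigr => y _; rewrite /out_prob -mulr_suml mulrA [_^-1 * _]mulrC.
Qed.

End WeaklySymmetric.

Theorem lemma2 (R : realType) (F : finFieldType) (Y : finType)
  (W : F -> Y -> R) (n : nat) (eps : R) :
  is_dmc W -> weakly_symmetric W -> 0 < eps ->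
  prob0 W (fun y : {ffun 'I_n -> Y} => frob (relmat W y) (@zero_floor R F n) <= (1 - eps) * mu W * n%:R)
    <= expR (- (2 * n%:R * mu W ^+ 2 * eps ^+ 2))
  /\
  prob0 W (fun y : {ffun 'I_n -> Y} => frob (relmat W y) (relmat W y) >= (1 + eps) * n%:R * mu W)
    <= expR (- (2 * n%:R * mu W ^+ 2 * eps ^+ 2)).
Proof.
move=> [W_ge0 W_sum1] [P [P_partition P_perm]] eps_gt0.
have rows_perm := fun B (PB : B \in P) => (P_perm B PB).1.
have cols_perm := fun B (PB : B \in P) => (P_perm B PB).2.
have mean_APP0 := mean_APP0 P_partition rows_perm cols_perm.
have mean_sqnorm := mean_sqnorm_APP P_partition rows_perm cols_perm.
have mu_ge0 : 0 <= mu W.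
  by rewrite -mean_sqnorm sumr_ge0 // => y _; rewrite mulr_ge0 ?sqnorm_ge0.
have d_ge0 : 0 <= eps * mu W by rewrite mulr_ge0 // ltW.
have w_ge0 (y : {ffun 'I_n -> Y}) : 0 <= \prod_j W 0 (y j) by exact: prodr_ge0.
rewrite (_ : 2 * n%:R * mu W ^+ 2 * eps ^+ 2 = 2 * n%:R * (eps * mu W) ^+ 2); last by ring.
split.
- have := hoeffding_lower_tail (W_ge0 0) (W_sum1 0) (fun y => APP_ge0 W_ge0 y 0)
    (fun y => APP_le1 W_ge0 y 0) n d_ge0.
  apply: le_trans; apply: ler_sum_pred => // y.
  rewrite frob_relmat_zero_floor mean_APP0.
  by rewrite (_ : (1 - eps) * _ * _ = n%:R * (mu W - eps * mu W)) //; ring.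
- have X_ge0 y : 0 <= 1 - sqnorm (APP W y) by rewrite subr_ge0 sqnorm_APP_le1.
  have X_le1 y : 1 - sqnorm (APP W y) <= 1 by rewrite lerBlDr lerDl sqnorm_ge0.
  have := hoeffding_lower_tail (W_ge0 0) (W_sum1 0) X_ge0 X_le1 n d_ge0.
  apply: le_trans; apply: ler_sum_pred => // y.
  have -> : \sum_y W 0 y * (1 - sqnorm (APP W y)) = 1 - mu W.
    by under eq_bigr do rewrite mulrBr mulr1; rewrite sumrB W_sum1 mean_sqnorm.
  rewrite frob_relmat_self sumrB sumr_const card_ord; lra.
Qed.
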